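(* Let $G$ be a graph of girth at least $6$, $v\in V(G)$, $q$ a positive integer and $c=4q+2$. For $t\in\{2q+1,\dots,4q+2\}$ define $\mu_t:V(G[K_q])\to[c]$ by $\mu_t(x,i)=i$ if $d_G(x,v)\in\{0,2\}$, $\mu_t(x,i)=q+i$ if $d_G(x,v)=1$, and $\mu_t(x,i)=t$ if $d_G(x,v)\ge 3$ (including $d_G(x,v)=\infty$). Then $\{\mu_t: 2q+1\le t\le 4q+2\}$ induces a clique (of $2q+2$ vertices) in $K_c^{G[K_q]}$.
   Context: $[c]=\{1,\dots,c\}$; $d_G$ is the graph distance in $G$. $G[K_q]$ has vertex set $V(G)\times[q]$, with $(x,i)\sim(y,j)$ iff $xy\in E(G)$, or $x=y$ and $i\ne j$. $K_c^{F}$ has as vertices all maps $V(F)\to[c]$, with $f\sim g$ iff $f(x)\ne g(y)$ and $f(y)\ne g(x)$ for every edge $xy$ of $F$. *)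

From mathcomp Require Import all_boot.
Set Implicit Arguments. Unset Strict Implicit. Unset Printing Implicit Defensive.

Definition simple_graph (T : finType) (e : rel T) : Prop :=
  symmetric e /\ irreflexive e.

Definition girth_ge (T : finType) (e : rel T) (g : nat) : Prop :=
  forall s : seq T, 3 <= size s -> ucycle e s -> g <= size s.

Fixpoint walk_le (T : finType) (e : rel T) (n : nat) (x y : T) : bool :=
  if n is n'.+1 then (x == y) || [exists z, e x z && walk_le e n' z y]
  else x == y.

(* graph distance d_G(x,y); None stands for infinity (no path).
   In a finite graph a shortest path has length < #|T|. *)
Definition gdist (T : finType) (e : rel T) (x y : T) : option nat :=
  let k := find (fun k => walk_le e k x y) (iota 0 #|T|) in
  if k < #|T| then Some k else None.

(* the lexicographic product G[K_q], vertex set T * [q]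
   (the index i : 'I_q stands for the element i+1 of [q]) *)
Definition lexK (T : finType) (e : rel T) (q : nat) : rel (T * 'I_q) :=
  fun a b => e a.1 b.1 || ((a.1 == b.1) && (a.2 != b.2)).

(* vertices of K_c^F: maps V(F) -> [c] = {1,...,c} (colours are nats) *)
Definition cmap (V : Type) (c : nat) (f : V -> nat) : Prop :=
  forall u, 1 <= f u <= c.

Definition expadj (V : Type) (F : rel V) (f g : V -> nat) : Prop :=
  forall x y, F x y -> f x != g y /\ f y != g x.

Definition mu (T : finType) (e : rel T) (v : T) (q t : nat) (a : T * 'I_q) : nat :=
  match gdist e a.1 v with
  | Some 0 | Some 2 => (a.2 : nat).+1
  | Some 1 => q + (a.2 : nat).+1
  | _ => t
  end.

Arguments mu {T} e v q t a.
Arguments lexK {T} e q a b.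

From mathcomp Require Import all_boot.
From mathcomp Require Import zify.

Set Implicit Arguments.
Unset Strict Implicit.
Unset Printing Implicit Defensive.

(* Vertices at distance 0 or 2 from v get colours in [1, q], neighbours of v
   colours in [q+1, 2q], and all other vertices the colour t > 2q.  Two
   vertices coloured from the same block of [1, 2q] are never adjacent in G:
   two neighbours of v would close a triangle, two vertices at distance 2
   a triangle or a 5-cycle, and v is not adjacent to vertices at distance 2.
   Hence adjacent vertices of G[K_q] can only clash on the colour t vs t', and
   two copies (x, i), (x, j) of a vertex only on i vs j. *)

Section GraphDistance.
Variables (T : finType) (e : rel T).

Lemma gdistP x y k : gdist e x y = Some k ->
  walk_le e k x y /\ forall j, j < k -> ~~ walk_le e j x y.
Proof.
rewrite /gdist; case: ifP => // k_lt [<-]; split.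
  have has_walk : has (fun k => walk_le e k x y) (iota 0 #|T|).
    by rewrite has_find size_iota.
  by have := nth_find 0 has_walk; rewrite nth_iota.
move=> j j_lt; have := before_find 0 j_lt; rewrite nth_iota ?add0n => [->//|].
exact: ltn_trans j_lt k_lt.
Qed.

Lemma gdist0_eq x y : gdist e x y = Some 0 -> x = y.
Proof. by case/gdistP => /= /eqP. Qed.

Lemma gdist1_adj x y : gdist e x y = Some 1 -> e x y.
Proof.
case/gdistP => /= /orP [/eqP ->|/existsP [z /andP [xz /eqP <-]]] // shortest.
by have := shortest 0 isT; rewrite /= eqxx.
Qed.

Lemma gdist2P x y : gdist e x y = Some 2 ->
  [/\ x != y, ~~ e x y & exists2 z, e x z & e z y].
Proof.
case/gdistP => /= walk2 shortest.
have x_neq_y : x != y := shortest 0 isT.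
have := shortest 1 isT; rewrite /= (negbTE x_neq_y) /= => no_walk1.
have not_xy : ~~ e x y.
  apply: contra no_walk1 => xy; apply/existsP; exists y; by rewrite xy eqxx.
split => //.
move: walk2; rewrite (negbTE x_neq_y) /= => /existsP [z /andP [xz]].
case/orP => [/eqP zy|/existsP [w /andP [zw /eqP wy]]].
  by rewrite -zy xz in not_xy.
by exists z; rewrite // -wy.
Qed.

End GraphDistance.

Section Girth6.
Variables (T : finType) (e : rel T).
Hypotheses (e_simple : simple_graph e) (e_girth : girth_ge e 6).

Lemma adj_sym x y : e x y = e y x.
Proof. by case: e_simple => ->. Qed.

Lemma adj_neq x y : e x y -> x != y.
Proof. by case: e_simple => _ e_irr; apply: contraTneq => ->; rewrite e_irr. Qed.

Lemma no_triangle x y z : e x y -> e y z -> e z x -> False.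
Proof.
move=> xy yz zx; have := @e_girth [:: x; y; z] isT.
rewrite /ucycle /= xy yz zx /= !inE negb_or (adj_neq xy) (adj_neq yz).
by rewrite eq_sym (adj_neq zx) => /(_ isT).
Qed.

Lemma no_pentagon a b c d f : e a b -> e b c -> e c d -> e d f -> e f a ->
  uniq [:: a; b; c; d; f] -> False.
Proof.
move=> ab bc cd df fa abcdf_uniq; have := @e_girth [:: a; b; c; d; f] isT.
rewrite /ucycle /= ab bc cd df fa; move: abcdf_uniq => /= /and5P [-> -> -> -> _].
by move=> /(_ isT).
Qed.

Variable v : T.

Lemma gdist1_adj_free x y :
  e x y -> gdist e x v = Some 1 -> gdist e y v = Some 1 -> False.
Proof.
move=> xy /gdist1_adj xv /gdist1_adj yv.
by apply: (no_triangle xy yv); rewrite adj_sym.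
Qed.

Lemma gdist2_adj_free x y :
  e x y -> gdist e x v = Some 2 -> gdist e y v = Some 2 -> False.
Proof.
move=> xy /gdist2P [x_neq_v not_xv [a xa av]] /gdist2P [y_neq_v not_yv [b yb bv]].
have [a_eq_b|a_neq_b] := eqVneq a b.
  by apply: (no_triangle xy yb); rewrite adj_sym -a_eq_b.
apply: (no_pentagon (a := v) (b := a) (c := x) (d := y) (f := b)) => //;
  rewrite 1?adj_sym //.
have a_neq_y : a != y by apply: contraNneq not_yv => <-.
have x_neq_b : x != b by apply: contraNneq not_xv => ->.
rewrite /= !inE !negb_or a_neq_b a_neq_y x_neq_b (adj_neq xy) (adj_neq yb).
rewrite ![v == _]eq_sym (adj_neq av) (adj_neq bv) x_neq_v y_neq_v.
by rewrite eq_sym (adj_neq xa).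
Qed.

Lemma gdist_even_adj_free x y : e x y ->
  gdist e x v \in [:: Some 0; Some 2] -> gdist e y v \in [:: Some 0; Some 2] ->
  False.
Proof.
move=> xy; rewrite !inE => /orP [] /eqP dx /orP [] /eqP dy.
- by move: xy; rewrite (gdist0_eq dx) (gdist0_eq dy) => /adj_neq /eqP.
- by case: (gdist2P dy) => _ /negP; rewrite -(gdist0_eq dx) adj_sym.
- by case: (gdist2P dx) => _ /negP; rewrite -(gdist0_eq dy).
- exact: gdist2_adj_free xy dx dy.
Qed.

Lemma mu_adj_neq q t t' x y (i j : 'I_q) :
  2 * q + 1 <= t -> 2 * q + 1 <= t' -> t != t' -> e x y ->
  mu e v q t (x, i) != mu e v q t' (y, j).
Proof.
move=> t_gt t'_gt t_neq xy; have := ltn_ord i; have := ltn_ord j; rewrite /mu /=.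
case dx: (gdist e x v) => [[|[|[|?]]]|]; case dy: (gdist e y v) => [[|[|[|?]]]|];
  try lia; exfalso;
  first [exact: gdist1_adj_free xy dx dy | by apply: (gdist_even_adj_free xy); rewrite ?dx ?dy].
Qed.

End Girth6.

Section Colouring.
Variables (T : finType) (e : rel T) (v : T) (q : nat).

Lemma mu_cmap c t : 2 * q <= c -> 0 < t <= c -> cmap c (mu e v q t).
Proof.
move=> q_le t_in [x i]; have := ltn_ord i; rewrite /mu /=.
case: (gdist e x v) => [[|[|[|?]]]|]; lia.
Qed.

Lemma mu_fibre_neq t t' x (i j : 'I_q) :
  i != j -> t != t' -> mu e v q t (x, i) != mu e v q t' (x, j).
Proof.
rewrite -(inj_eq val_inj) /mu /=.
case: (gdist e x v) => [[|[|[|?]]]|]; lia.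
Qed.

End Colouring.

Theorem claim4 (T : finType) (e : rel T) (v : T) (q : nat) :
  simple_graph e -> girth_ge e 6 -> 0 < q ->
  (forall t, 2 * q + 1 <= t <= 4 * q + 2 -> cmap (4 * q + 2) (mu e v q t)) /\
  (forall t t', 2 * q + 1 <= t <= 4 * q + 2 -> 2 * q + 1 <= t' <= 4 * q + 2 ->
     t != t' -> expadj (lexK e q) (mu e v q t) (mu e v q t')).
Proof.
move=> e_simple e_girth _; split=> [t t_in|t t' /andP [t_gt _] /andP [t'_gt _] t_neq].
  by apply: mu_cmap; lia.
move=> [x i] [y j] /orP [xy|/andP [/eqP /= <- i_neq_j]].
  by split; apply: mu_adj_neq; rewrite // (adj_sym e_simple).
by split; apply: mu_fibre_neq; rewrite // eq_sym.
Qed.
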